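(* Let $\mathcal G=(\mathcal V,\mathcal E)$ be a finite digraph with vertices $v_1,\dots,v_N$ and finite digraph diameter $D$, and run the synchronous dynamics described in the context. For each $i$ let $\tau_i=\min\{k\ge 1: w_i[k]=\text{True}\}$ be the number of iterations after which vertex $v_i$ stops (the first step at which $y_i$ does not change). Then the algorithm converges in $D+1$ iterations, i.e. $\max_{1\le i\le N}\tau_i=D+1$ (equivalently $\min\{k\ge1: w_i[k]=\text{True for all } i\}=D+1$), and hence $D=\max_{1\le i\le N}\tau_i-1$.
   Context: For $v\in\mathcal V$, $\mathcal N^-_{v}=\{u:(u,v)\in\mathcal E\}$ is the set of in-neighbors of $v$. The finite digraph diameter $D$ is the maximum, over all ordered pairs $(u,v)$ of vertices such that a directed path from $u$ to $v$ exists, of the number of edges of a shortest directed path from $u$ to $v$ (with distance $0$ when $u=v$). The dynamics are run synchronously by all vertices at every time step $k=0,1,2,\dots$: initialize $x_i[0]=\{v_i\}$, $y_i[0]=1$, $z_i[0]=\emptyset$, $w_i[0]=\text{False}$, and for $k\ge 0$ set $x_i[k+1]=\bigcup_{v_j\in\mathcal N^-_{v_i}\cup\{v_i\}}x_j[k]$; $y_i[k+1]=\max\{\max_{v_j\in\mathcal N^-_{v_i}}|x_j[k]|,\ |x_i[k+1]|\}$ (the inner maximum is omitted if $\mathcal N^-_{v_i}=\emptyset$); $z_i[k+1]=\{v_j:\ y_i[k+1]=y_j[k]\ \text{and}\ v_j\in\bigcup_{v_l\in\mathcal N^-_{v_i}\cup\{v_i\}}x_l[k]\}$; $w_i[k+1]=\text{True}$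 if $y_i[k+1]=y_i[k]$ and False otherwise. *)

From mathcomp Require Import all_boot.
Set Implicit Arguments. Unset Strict Implicit. Unset Printing Implicit Defensive.

(* Digraph: vertex set = finite type T, edge relation E : rel T,
   (u, v) is an edge iff E u v.  In-neighbours of v: [set u | E u v]. *)

Section Dyn.
Variables (T : finType) (E : rel T).

Definition walk_len (u v : T) (k : nat) : Prop :=
  exists p : seq T, [/\ size p = k, path E u p & last u p = v].

Definition shortest_dist (u v : T) (d : nat) : Prop :=
  walk_len u v d /\ forall d', walk_len u v d' -> d <= d'.

Definition is_diameter (D : nat) : Prop :=
  (exists u v, shortest_dist u v D) /\
  (forall u v d, shortest_dist u v d -> d <= D).

Record state := State {
  sx : T -> {set T};
  sy : T -> nat;
  sz : T -> {set T};
  sw : T -> bool }.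

Definition init_state : state :=
  State (fun i => [set i]) (fun _ => 1) (fun _ => set0) (fun _ => false).

Definition step (s : state) : state :=
  let x' := fun i => \bigcup_(j | E j i || (j == i)) sx s j in
  let y' := fun i => maxn (\max_(j | E j i) #|sx s j|) #|x' i| in
  State x'
        y'
        (fun i => [set j | (y' i == sy s j) && (j \in x' i)])
        (fun i => y' i == sy s i).

Definition st (k : nat) : state := iter k step init_state.

Definition w_at (k : nat) (i : T) : bool := sw (st k) i.

Definition first_stop (i : T) (t : nat) : Prop :=
  [/\ 1 <= t, w_at t i & forall k, 1 <= k < t -> ~~ w_at k i].

Definition first_all_stop (t : nat) : Prop :=
  [/\ 1 <= t, (forall i, w_at t i) &
      forall k, 1 <= k < t -> exists i, ~~ w_at k i].

End Dyn.

From mathcomp Require Import all_boot.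
Set Implicit Arguments. Unset Strict Implicit. Unset Printing Implicit Defensive.

(* The key invariant is that x_i[k] is the in-ball of radius k around v_i:
   the set of vertices having a directed walk of length at most k to v_i
   ([mem_sx]).  Since every in-neighbour ball x_j[k] is contained in
   x_i[k+1], the maximum in the definition of y_i is attained by |x_i[k+1]|,
   so y_i[k] = |x_i[k]| ([sy_card]).  Hence v_i fails to stop at step k+1
   exactly when its ball strictly grows, i.e. when some vertex is at
   distance exactly k+1 from v_i ([not_stopped_iff_dist]).

   For the theorem: no vertex is at distance D+1 from anyone, so every
   vertex has stopped at step D+1; conversely, a pair (u,v) realising the
   diameter has, along a shortest path, vertices at every distance k <= D
   from v ([shortest_suffix]), so v is still running at steps 1..D.  The
   stopping times are therefore all at most D+1, with D+1 attained at v. *)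

Section Walks.
Variables (T : finType) (E : rel T).

Lemma walk_len0 u v : walk_len E u v 0 <-> u = v.
Proof.
split; first by case=> p [/size0nil -> _ /=].
by move=> ->; exists [::].
Qed.

Lemma walk_len_cat u w v a b :
  walk_len E u w a -> walk_len E w v b -> walk_len E u v (a + b).
Proof.
move=> [p [sp pp lp]] [q [sq pq lq]]; exists (p ++ q); split.
- by rewrite size_cat sp sq.
- by rewrite cat_path pp lp.
- by rewrite last_cat lp.
Qed.

Lemma walk_len_split u v a b :
  walk_len E u v (a + b) -> exists w, walk_len E u w a /\ walk_len E w v b.
Proof.
move=> [p [sp pp lp]]; rewrite -(cat_take_drop a p) cat_path in pp.
case/andP: pp => ptake pdrop.
exists (last u (take a p)); split.
  by exists (take a p); split => //; rewrite size_takel // sp leq_addr.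
exists (drop a p); split => //; first by rewrite size_drop sp addKn.
by rewrite -last_cat cat_take_drop.
Qed.

Lemma walk_len_rcons u j i m :
  walk_len E u j m -> E j i -> walk_len E u i m.+1.
Proof.
move=> [p [sp pp lp]] e; exists (rcons p i); split.
- by rewrite size_rcons sp.
- by rewrite rcons_path pp lp e.
- by rewrite last_rcons.
Qed.

Lemma walk_len_last u i m :
  walk_len E u i m.+1 -> exists j, walk_len E u j m /\ E j i.
Proof.
case=> p []; case/lastP: p => [//|q z].
rewrite size_rcons rcons_path last_rcons => /succn_inj sq /andP[pq e] zi.
by exists (last u q); split; [exists q | rewrite -zi].
Qed.

(* A suffix of a shortest walk is again shortest: a vertex at distance d
   from v yields vertices at every distance k <= d from v. *)
Lemma shortest_suffix u v d k :
  shortest_dist E u v d -> k <= d -> exists x, shortest_dist E x v k.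
Proof.
move=> [w mn] kd; move: w; rewrite -(subnK kd) => /walk_len_split [x [w1 w2]].
exists x; split => // d' wd'; have := mn _ (walk_len_cat w1 wd').
by rewrite -{1}(subnK kd) leq_add2l.
Qed.

End Walks.

Section Dynamics.
Variables (T : finType) (E : rel T).

Lemma mem_sx k u i :
  u \in sx (st E k) i <-> exists2 m, m <= k & walk_len E u i m.
Proof.
elim: k i => [|k IH] i.
  rewrite /= in_set1; split; first by move/eqP->; exists 0 => //; apply/walk_len0.
  by case=> m; rewrite leqn0 => /eqP -> /walk_len0 ->.
change (sx (st E k.+1) i) with (\bigcup_(j | E j i || (j == i)) sx (st E k) j).
split.
  case/bigcupP=> j /orP[e|/eqP ->] /IH [m mk w].
    by exists m.+1 => //; exact: walk_len_rcons w e.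
  by exists m => //; exact: leqW.
case=> [[|m]] mk w.
  by apply/bigcupP; exists i; [rewrite eqxx orbT | apply/IH; exists 0].
case: (walk_len_last w) => j [wj e].
by apply/bigcupP; exists j; [rewrite e | apply/IH; exists m].
Qed.

Lemma sx_step_sub k i : sx (st E k) i \subset sx (st E k.+1) i.
Proof.
apply/subsetP => u /mem_sx [m mk w]; apply/mem_sx.
by exists m => //; exact: leqW.
Qed.

(* The in-neighbours' balls are contained in the new ball, so y_i[k] is
   simply the size of x_i[k]. *)
Lemma sy_card k i : sy (st E k) i = #|sx (st E k) i|.
Proof.
case: k => [|k]; first by rewrite /= cards1.
change (sy (st E k.+1) i) with
  (maxn (\max_(j | E j i) #|sx (st E k) j|) #|sx (st E k.+1) i|).
apply/maxn_idPr/bigmax_leqP => j e; apply/subset_leq_card/subsetP.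
move=> u /mem_sx [m mk w]; apply/mem_sx; exists m.+1 => //.
exact: walk_len_rcons w e.
Qed.

Lemma not_stopped_iff_dist k i :
  ~~ w_at E k.+1 i <-> exists u, shortest_dist E u i k.+1.
Proof.
have -> : w_at E k.+1 i = (#|sx (st E k.+1) i| == #|sx (st E k) i|).
  by rewrite -!sy_card.
rewrite eqn_leq (subset_leq_card (sx_step_sub k i)) andbT -ltnNge.
split.
  move=> lt_card; have : ~~ (sx (st E k.+1) i \subset sx (st E k) i).
    by apply: contraTN lt_card => /subset_leq_card; rewrite leqNgt.
  case/subsetPn => u /mem_sx [m mk wm] /negP nu; exists u.
  have far d : walk_len E u i d -> k < d.
    by move=> wd; rewrite ltnNge; apply/negP => dk; apply/nu/mem_sx; exists d.
  suff em : k.+1 = m by split=> [|d /far]; rewrite em.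
  by apply/eqP; rewrite eqn_leq far.
move=> [u [w mn]]; apply: proper_card; rewrite properE sx_step_sub andTb.
apply/subsetPn; exists u; first by apply/mem_sx; exists k.+1.
by apply/negP=> /mem_sx [m mk /mn]; rewrite leqNgt ltnS mk.
Qed.

Lemma stopped_after_diameter D i :
  (forall u v d, shortest_dist E u v d -> d <= D) -> w_at E D.+1 i.
Proof.
move=> Dmax; apply/negPn/negP => /not_stopped_iff_dist [u /Dmax].
by rewrite ltnn.
Qed.

Lemma running_before_diameter u v D k :
  shortest_dist E u v D -> 1 <= k <= D -> ~~ w_at E k v.
Proof.
case: k => [//|k] Duv /andP[_ kD].
by have [x sx_k] := shortest_suffix Duv kD; apply/not_stopped_iff_dist; exists x.
Qed.

Lemma first_stop_exists i k : 1 <= k -> w_at E k i -> exists t, first_stop E i t.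
Proof.
move=> k1 wk; have ex : exists k, (0 < k) && w_at E k i by exists k; rewrite k1.
case: (ex_minnP ex) => t /andP[t1 wt] mn; exists t; split => // k' /andP[k'1 k't].
by apply/negP => wk'; move: (mn k'); rewrite k'1 wk' leqNgt k't => /(_ isT).
Qed.

Lemma first_stop_le i k t : 1 <= k -> w_at E k i -> first_stop E i t -> t <= k.
Proof.
move=> k1 wk [_ _ mn]; rewrite leqNgt; apply/negP => lt.
by move: (mn k); rewrite k1 lt wk => /(_ isT).
Qed.

Lemma first_stop_gt i n t :
  (forall k, 1 <= k <= n -> ~~ w_at E k i) -> first_stop E i t -> n < t.
Proof.
move=> run [t1 wt _]; rewrite ltnNge; apply/negP => tn.
by move: (run t); rewrite t1 tn wt => /(_ isT).
Qed.

End Dynamics.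

Theorem theorem3 (T : finType) (E : rel T) (D : nat) :
  is_diameter E D ->
  (forall i : T, exists t, first_stop E i t) /\
  (forall tau : T -> nat, (forall i, first_stop E i (tau i)) ->
      \max_(i : T) tau i = D.+1 /\ D = (\max_(i : T) tau i).-1) /\
  first_all_stop E D.+1.
Proof.
move=> [[u [v Duv]] Dmax].
have stopD i : w_at E D.+1 i := stopped_after_diameter i Dmax.
have runv k : 1 <= k <= D -> ~~ w_at E k v := running_before_diameter Duv.
split; first by move=> i; exact: first_stop_exists (stopD i).
split.
  move=> tau htau.
  suff mx : \max_(i : T) tau i = D.+1 by rewrite mx.
  apply/eqP; rewrite eqn_leq; apply/andP; split.
    by apply/bigmax_leqP => i _; exact: first_stop_le (stopD i) (htau i).
  exact: leq_trans (first_stop_gt runv (htau v)) (leq_bigmax v).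
split => // k /andP[k1 kD]; exists v; apply: runv.
by rewrite k1 -ltnS kD.
Qed.
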